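(* Let $\mathfrak e\in\mathbb R^\times$. Define $\widetilde s:SO_2(\mathbb R)\to\mathbb C^\times$ by $\widetilde s(k_t)=e^{-\frac{i\pi\operatorname{sgn}(\mathfrak e)}{4}u'(t)}$ for $-\pi\le t<\pi$. Then for all $g_1,g_2\in SO_2(\mathbb R)$, $$\widetilde c_{\mathfrak e}(g_1,g_2)=\widetilde s(g_1)^{-1}\widetilde s(g_2)^{-1}\widetilde s(g_1g_2);$$ in particular the restriction of the class of $\widetilde c_{\mathfrak e}$ to $SO_2(\mathbb R)$ is trivial.
   Context: For $t\in[-\pi,\pi)$, $k_t=\begin{pmatrix}\cos t&-\sin t\\\sin t&\cos t\end{pmatrix}$, so $SO_2(\mathbb R)=\{k_t:-\pi\le t<\pi\}$. $u:\mathbb R\to\mathbb Z$ is $u(t)=2k$ if $t=k\pi$ ($k\in\mathbb Z$) and $u(t)=2k+1$ if $k\pi<t<(k+1)\pi$; $u'(t)=u(t)+\frac{2}{\pi}t$. For $g_1,g_2\in SL_2(\mathbb R)$ with $g_3=g_1g_2$ and lower-left entries $c_1,c_2,c_3$, $\widetilde c_{\mathfrak e}(g_1,g_2)=e^{\frac{i\pi\operatorname{sgn}(\mathfrak e)}{4}\operatorname{sgn}(c_1c_2c_3)}$ (with $\operatorname{sgn}(0)=0$); this is the Perrin–Rao $\mu_8$-valued cocycle attached to the character $t\mapsto e^{2\pi i\mathfrak et}$. *)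

From Stdlib Require Import Reals ZArith ClassicalEpsilon.
From Coquelicot Require Import Coquelicot.
Open Scope R_scope.

Record mat2 := Mat2 { m11 : R; m12 : R; m21 : R; m22 : R }.

Definition mmul (g h : mat2) : mat2 :=
  Mat2 (m11 g * m11 h + m12 g * m21 h) (m11 g * m12 h + m12 g * m22 h)
       (m21 g * m11 h + m22 g * m21 h) (m21 g * m12 h + m22 g * m22 h).

Definition krot (t : R) : mat2 := Mat2 (cos t) (- sin t) (sin t) (cos t).

Definition inSO2 (g : mat2) : Prop := exists t, -PI <= t < PI /\ g = krot t.

Definition Rsgn (x : R) : R :=
  match Rlt_dec 0 x with
  | left _ => 1
  | right _ => match Rlt_dec x 0 with left _ => -1 | right _ => 0 end
  end.

Definition floorZ (x : R) : Z := (up x - 1)%Z.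

Definition u (t : R) : Z :=
  let k := floorZ (t / PI) in
  match Req_EM_T t (IZR k * PI) with
  | left _ => (2 * k)%Z
  | right _ => (2 * k + 1)%Z
  end.

Definition u' (t : R) : R := IZR (u t) + 2 / PI * t.

Definition cexp (theta : R) : C := (cos theta, sin theta).

Definition ctilde (e : R) (g1 g2 : mat2) : C :=
  cexp (PI * Rsgn e / 4 * Rsgn (m21 g1 * m21 g2 * m21 (mmul g1 g2))).

(* the parameter t in [-pi,pi) of g in SO_2(R) (arbitrary if g not in SO_2) *)
Definition angle (g : mat2) : R :=
  epsilon (inhabits 0) (fun t => -PI <= t < PI /\ g = krot t).

Definition stilde (e : R) (g : mat2) : C :=
  cexp (- (PI * Rsgn e / 4) * u' (angle g)).

(* Write g_i = k_(t_i) and reduce t_1 + t_2 = t_3 + 2 pi m with t_3 in [-pi, pi).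
   Since the lower-left entry of k_t is sin t, both sides of the identity are of the
   form exp(i pi sgn(e) x / 4): on the left x = sgn(sin t_1) sgn(sin t_2) sgn(sin t_3),
   on the right x = u(t_1) + u(t_2) - u(t_3) + 4m, because u' adds 2t/pi to u.
   Sorting each t_i into one of the arcs {-pi}, (-pi,0), {0}, (0,pi), on which u and
   sgn(sin) are constant, shows that the two values of x differ by a multiple of 8. *)

From Stdlib Require Import Reals ZArith Lra Lia ClassicalEpsilon.
From Coquelicot Require Import Coquelicot.
Open Scope R_scope.

Lemma Cmult_cexp x y : Cmult (cexp x) (cexp y) = cexp (x + y).
Proof. unfold Cmult, cexp; simpl. rewrite cos_plus, sin_plus. f_equal; ring. Qed.

Lemma Cinv_cexp x : Cinv (cexp x) = cexp (- x).
Proof.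
  unfold Cinv, cexp; simpl.
  assert (Hnorm : cos x * (cos x * 1) + sin x * (sin x * 1) = 1).
  { pose proof (sin2_cos2 x) as H. unfold Rsqr in H. lra. }
  rewrite Hnorm, cos_neg, sin_neg. f_equal; field.
Qed.

Lemma cexp_neq0 x : cexp x <> 0%C.
Proof.
  unfold cexp; intro H. injection H as Hcos Hsin.
  apply (cos_sin_0 x); split; assumption.
Qed.

Lemma cexp_add_2PI_nat x k : cexp (x + 2 * INR k * PI) = cexp x.
Proof. unfold cexp. rewrite cos_period, sin_period. reflexivity. Qed.

Lemma cexp_add_2PI_mult x n : cexp (x + 2 * PI * IZR n) = cexp x.
Proof.
  destruct (Z.le_gt_cases 0 n) as [Hn | Hn].
  - destruct (Z_of_nat_complete n Hn) as [k ->].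
    rewrite <- INR_IZR_INZ, <- (cexp_add_2PI_nat x k). f_equal; ring.
  - destruct (Z_of_nat_complete (- n) ltac:(lia)) as [k Hk].
    replace n with (- Z.of_nat k)%Z by lia.
    rewrite <- (cexp_add_2PI_nat (x + 2 * PI * IZR (- Z.of_nat k)) k).
    rewrite opp_IZR, <- INR_IZR_INZ. f_equal; ring.
Qed.

Lemma krot_cexp a b : cexp a = cexp b -> krot a = krot b.
Proof. unfold cexp, krot; intro E. injection E as Ecos Esin. rewrite Ecos, Esin. reflexivity. Qed.

Lemma krot_add_2PI_mult t n : krot (t + 2 * PI * IZR n) = krot t.
Proof. apply krot_cexp, cexp_add_2PI_mult. Qed.

Lemma mmul_krot a b : mmul (krot a) (krot b) = krot (a + b).
Proof. unfold mmul, krot; simpl. rewrite cos_plus, sin_plus. f_equal; ring. Qed.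

Lemma krot_inj t t' : -PI <= t < PI -> -PI <= t' < PI -> krot t = krot t' -> t = t'.
Proof.
  intros Ht Ht' E. pose proof PI_RGT_0.
  assert (Ecos : cos t = cos t') by exact (f_equal m11 E).
  assert (Esin : sin t = sin t') by exact (f_equal m21 E).
  assert (Hsin : sin (t - t') = 0) by (rewrite sin_minus, Ecos, Esin; ring).
  assert (Hcos : cos (t - t') = 1).
  { rewrite cos_minus, Ecos, Esin. pose proof (sin2_cos2 t') as H1. unfold Rsqr in H1. lra. }
  destruct (sin_eq_0_0 _ Hsin) as [k Hk].
  assert (Hlo : (-2 < k)%Z) by (apply lt_IZR, (Rmult_lt_reg_r PI); lra).
  assert (Hhi : (k < 2)%Z) by (apply lt_IZR, (Rmult_lt_reg_r PI); lra).
  assert (k = -1 \/ k = 0 \/ k = 1)%Z as [-> | [-> | ->]] by lia; simpl in Hk.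
  - replace (t - t') with (- PI) in Hcos by lra. rewrite cos_neg, cos_PI in Hcos. lra.
  - lra.
  - rewrite Hk, Rmult_1_l, cos_PI in Hcos. lra.
Qed.

Lemma angle_krot t : -PI <= t < PI -> angle (krot t) = t.
Proof.
  intros Ht. unfold angle.
  destruct (epsilon_spec (inhabits 0) (fun t0 => -PI <= t0 < PI /\ krot t = krot t0))
    as [Hrange Heq].
  - exists t; split; [exact Ht | reflexivity].
  - symmetry; apply krot_inj; assumption.
Qed.

Lemma angle_reduction s : exists m : Z, -PI <= s - 2 * PI * IZR m < PI.
Proof.
  pose proof PI_RGT_0.
  set (y := (s + PI) / (2 * PI)).
  assert (Hs : s = 2 * PI * y - PI) by (unfold y; field; lra).
  exists (Zfloor y). pose proof (Zfloor_bound y). rewrite Hs. split; nra.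
Qed.

Lemma Rsgn_pos x : 0 < x -> Rsgn x = 1.
Proof. intros; unfold Rsgn; destruct (Rlt_dec 0 x); [reflexivity | lra]. Qed.

Lemma Rsgn_neg x : x < 0 -> Rsgn x = -1.
Proof.
  intros; unfold Rsgn; destruct (Rlt_dec 0 x); [lra |].
  destruct (Rlt_dec x 0); [reflexivity | lra].
Qed.

Lemma Rsgn_0 : Rsgn 0 = 0.
Proof.
  unfold Rsgn; destruct (Rlt_dec 0 0); [lra |].
  destruct (Rlt_dec 0 0); [lra | reflexivity].
Qed.

Lemma Rsgn_cases x : (x < 0 /\ Rsgn x = -1) \/ (x = 0 /\ Rsgn x = 0) \/ (0 < x /\ Rsgn x = 1).
Proof.
  destruct (Rtotal_order x 0) as [H | [-> | H]].
  - left; split; [assumption | apply Rsgn_neg, H].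
  - right; left; split; [reflexivity | apply Rsgn_0].
  - right; right; split; [assumption | apply Rsgn_pos, H].
Qed.

Lemma Rsgn_mult x y : Rsgn (x * y) = Rsgn x * Rsgn y.
Proof.
  destruct (Rsgn_cases x) as [[Hx ->] | [[-> ->] | [Hx ->]]];
  destruct (Rsgn_cases y) as [[Hy ->] | [[-> ->] | [Hy ->]]];
  first [ rewrite Rmult_0_l, Rsgn_0; ring
        | rewrite Rmult_0_r, Rsgn_0; ring
        | rewrite Rsgn_pos by nra; ring
        | rewrite Rsgn_neg by nra; ring ].
Qed.

Lemma Rsgn_IZR x : exists s : Z, Rsgn x = IZR s.
Proof.
  destruct (Rsgn_cases x) as [[_ ->] | [[_ ->] | [_ ->]]];
  [exists (-1)%Z | exists 0%Z | exists 1%Z]; reflexivity.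
Qed.

Lemma floorZ_Zfloor x : floorZ x = Zfloor x.
Proof. unfold floorZ. rewrite up_Zfloor. lia. Qed.

Lemma u_mult_PI k : u (IZR k * PI) = (2 * k)%Z.
Proof.
  pose proof PI_RGT_0.
  unfold u. rewrite floorZ_Zfloor.
  replace (IZR k * PI / PI) with (IZR k) by (field; lra).
  rewrite ZfloorZ.
  destruct (Req_EM_T _ _) as [_ | Hne]; [reflexivity | contradiction].
Qed.

Lemma u_between k t : IZR k * PI < t < (IZR k + 1) * PI -> u t = (2 * k + 1)%Z.
Proof.
  intros Ht. pose proof PI_RGT_0.
  unfold u. rewrite floorZ_Zfloor, (Zfloor_eq k).
  - destruct (Req_EM_T _ _) as [E | _]; [lra | reflexivity].
  - split.
    + apply (Rmult_le_reg_r PI); [lra |]. unfold Rdiv. rewrite Rmult_assoc, Rinv_l; lra.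
    + apply (Rmult_lt_reg_r PI); [lra |]. unfold Rdiv. rewrite Rmult_assoc, Rinv_l; lra.
Qed.

Lemma arc_cases t : -PI <= t < PI ->
  (t = -PI /\ IZR (u t) = -2 /\ Rsgn (sin t) = 0) \/
  (-PI < t < 0 /\ IZR (u t) = -1 /\ Rsgn (sin t) = -1) \/
  (t = 0 /\ IZR (u t) = 0 /\ Rsgn (sin t) = 0) \/
  (0 < t < PI /\ IZR (u t) = 1 /\ Rsgn (sin t) = 1).
Proof.
  intros [Hlo Hhi]. pose proof PI_RGT_0.
  destruct (Rle_lt_or_eq_dec _ _ Hlo) as [Hlo' | <-];
    [destruct (Rtotal_order t 0) as [Hneg | [-> | Hpos]] |].
  - right; left. rewrite (u_between (-1)) by (simpl; lra).
    repeat split; try lra. apply Rsgn_neg, sin_lt_0_var; lra.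
  - right; right; left.
    pose proof (u_mult_PI 0) as Hu. rewrite Rmult_0_l in Hu.
    rewrite Hu, sin_0, Rsgn_0. repeat split; lra.
  - right; right; right. rewrite (u_between 0) by (simpl; lra).
    repeat split; try lra. apply Rsgn_pos, sin_gt_0; lra.
  - left. pose proof (u_mult_PI (-1)) as Hu.
    replace (IZR (-1) * PI) with (- PI) in Hu by (simpl; ring).
    rewrite Hu, sin_neg, sin_PI, Ropp_0, Rsgn_0. repeat split; simpl; lra.
Qed.

Lemma sgn_sin_product_mod8 a b m :
  let c := a + b - 2 * PI * IZR m in
  -PI <= a < PI -> -PI <= b < PI -> -PI <= c < PI ->
  exists k : Z, Rsgn (sin a) * Rsgn (sin b) * Rsgn (sin c)
     = IZR (u a) + IZR (u b) - IZR (u c) + 4 * IZR m + 8 * IZR k.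
Proof.
  intros c Ha Hb Hc. pose proof PI_RGT_0.
  assert (Hm : (m = -1 \/ m = 0 \/ m = 1)%Z).
  { assert (Hlo : (-2 < m)%Z) by (apply lt_IZR; unfold c in Hc; nra).
    assert (Hhi : (m < 2)%Z) by (apply lt_IZR; unfold c in Hc; nra).
    lia. }
  assert (Hcm : c = a + b - 2 * PI * IZR m) by reflexivity.
  clearbody c.
  destruct (arc_cases a Ha) as [[? [-> ->]] | [[? [-> ->]] | [[? [-> ->]] | [? [-> ->]]]]];
  destruct (arc_cases b Hb) as [[? [-> ->]] | [[? [-> ->]] | [[? [-> ->]] | [? [-> ->]]]]];
  destruct (arc_cases c Hc) as [[? [-> ->]] | [[? [-> ->]] | [[? [-> ->]] | [? [-> ->]]]]];
  destruct Hm as [-> | [-> | ->]]; simpl in Hcm;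
  first [ exists 0%Z; simpl; lra | exists 1%Z; simpl; lra | exists (-1)%Z; simpl; lra ].
Qed.

Lemma ctilde_krot_coboundary e a b : -PI <= a < PI -> -PI <= b < PI ->
  ctilde e (krot a) (krot b) =
  Cmult (Cmult (Cinv (stilde e (krot a))) (Cinv (stilde e (krot b))))
        (stilde e (mmul (krot a) (krot b))).
Proof.
  intros Ha Hb. pose proof PI_RGT_0.
  destruct (angle_reduction (a + b)) as [m Hc].
  set (c := a + b - 2 * PI * IZR m) in Hc.
  assert (Hkc : mmul (krot a) (krot b) = krot c).
  { rewrite mmul_krot, <- (krot_add_2PI_mult c m). f_equal. unfold c; ring. }
  destruct (sgn_sin_product_mod8 a b m Ha Hb Hc) as [k Hk]. fold c in Hk.
  destruct (Rsgn_IZR e) as [s Hs].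
  unfold ctilde, stilde. rewrite Hkc, !angle_krot by assumption. simpl m21.
  rewrite !Rsgn_mult, !Cinv_cexp, !Cmult_cexp, Hk.
  rewrite <- (cexp_add_2PI_mult _ (- (s * k))).
  f_equal. unfold u', c. rewrite opp_IZR, mult_IZR, Hs. field. lra.
Qed.

Theorem mainTheorem15 (e : R) (he : e <> 0) :
  (forall g1 g2 : mat2, inSO2 g1 -> inSO2 g2 ->
     ctilde e g1 g2 =
     Cmult (Cmult (Cinv (stilde e g1)) (Cinv (stilde e g2))) (stilde e (mmul g1 g2)))
  /\
  (exists f : mat2 -> C,
     (forall g, inSO2 g -> f g <> 0%C) /\
     (forall g1 g2 : mat2, inSO2 g1 -> inSO2 g2 ->
        ctilde e g1 g2 = Cmult (Cmult (Cinv (f g1)) (Cinv (f g2))) (f (mmul g1 g2)))).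
Proof.
  assert (coboundary : forall g1 g2, inSO2 g1 -> inSO2 g2 ->
    ctilde e g1 g2 =
    Cmult (Cmult (Cinv (stilde e g1)) (Cinv (stilde e g2))) (stilde e (mmul g1 g2))).
  { intros g1 g2 [a [Ha ->]] [b [Hb ->]]. apply ctilde_krot_coboundary; assumption. }
  split; [exact coboundary |].
  exists (stilde e). split; [| exact coboundary].
  intros g _. apply cexp_neq0.
Qed.
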